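(* Let $k\ge2$ and $n\ge 2k$ be integers, and set $\alpha=\frac{2k}{k+1}$, $\beta=\frac nk-2$, $a=\frac{n+\alpha}{2}$, $b=\frac{\alpha+\beta}{2}$, $c=\frac n2$, $d_1=2a+b-2c$, $d_2=c-a+1$, $d_3=4ab(k-1)$. Then the function $$g(t)=\frac{d_1t-d_2(1-t)+\sqrt{(d_1t-d_2(1-t))^2+d_3t}}{2c}$$ is concave on $[0,+\infty)$. *)

From Stdlib Require Import Reals.
Open Scope R_scope.

Definition concave_on (S : R -> Prop) (f : R -> R) : Prop :=
  forall x y l, S x -> S y -> 0 <= l <= 1 ->
    l * f x + (1 - l) * f y <= f (l * x + (1 - l) * y).

Definition g6 (k n : nat) (t : R) : R :=
  let kr := INR k in
  let nr := INR n in
  let alpha := 2 * kr / (kr + 1) in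
  let beta := nr / kr - 2 in
  let a := (nr + alpha) / 2 in
  let b := (alpha + beta) / 2 in
  let c := nr / 2 in
  let d1 := 2 * a + b - 2 * c in
  let d2 := c - a + 1 in
  let d3 := 4 * a * b * (kr - 1) in
  (d1 * t - d2 * (1 - t) + sqrt ((d1 * t - d2 * (1 - t)) ^ 2 + d3 * t)) / (2 * c).

(** Write [g t = (p t - q + sqrt (Q t)) / (2 c)] with [p = d1 + d2], [q = d2]
    and [Q t = (p t - q)^2 + d3 t]; it suffices that [sqrt Q] is concave on
    [t >= 0].  Expanding the quadratic [Q] along a
    segment gives [Q (l x + (1-l) y) = l^2 Q x + (1-l)^2 Q y + l (1-l) M]
    with [M] its polar form, so concavity of [sqrt Q] amounts to
    [2 sqrt (Q x) sqrt (Q y) <= M], i.e. [4 Q x Q y <= M^2].  This follows from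
    the identity [M^2 - 4 Q x Q y = (x - y)^2 d3 (d3 - 4 p q)], and the
    inequality [4 p q <= d3] is where the hypotheses on [k] and [n] enter. *)

From Stdlib Require Import Reals Lra Psatz.
Open Scope R_scope.

Lemma concave_on_ext (S : R -> Prop) (f g : R -> R) :
  (forall t, f t = g t) -> concave_on S f -> concave_on S g.
Proof.
  intros Hfg Hf x y l Sx Sy hl.
  rewrite <- !Hfg.
  now apply Hf.
Qed.

Lemma concave_on_affine_add_div (S : R -> Prop) (f : R -> R) (a b C : R) :
  0 < C -> concave_on S f -> concave_on S (fun t => (a * t - b + f t) / C).
Proof.
  intros hC Hf x y l Sx Sy hl.
  pose proof (Hf x y l Sx Sy hl) as Hxy.
  unfold Rdiv.
  assert (hC' : 0 < / C) by now apply Rinv_0_lt_compat.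
  nra.
Qed.

Lemma sqrt_convex_comb_le (Qx Qy M l : R) :
  0 <= Qx -> 0 <= Qy -> 0 <= M -> 4 * Qx * Qy <= M ^ 2 -> 0 <= l <= 1 ->
  l * sqrt Qx + (1 - l) * sqrt Qy
  <= sqrt (l ^ 2 * Qx + (1 - l) ^ 2 * Qy + l * (1 - l) * M).
Proof.
  intros hQx hQy hM hQM hl.
  pose proof (sqrt_sqrt Qx hQx) as ex.
  pose proof (sqrt_sqrt Qy hQy) as ey.
  pose proof (sqrt_pos Qx) as sx0.
  pose proof (sqrt_pos Qy) as sy0.
  assert (cross : 2 * sqrt Qx * sqrt Qy <= M).
  { apply Rsqr_incr_0_var; [| exact hM].
    unfold Rsqr.
    replace (2 * sqrt Qx * sqrt Qy * (2 * sqrt Qx * sqrt Qy))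
      with (4 * (sqrt Qx * sqrt Qx) * (sqrt Qy * sqrt Qy)) by ring.
    rewrite ex, ey. nra. }
  assert (hs : 0 <= l * sqrt Qx + (1 - l) * sqrt Qy) by nra.
  rewrite <- (sqrt_square _ hs).
  apply sqrt_le_1_alt.
  replace ((l * sqrt Qx + (1 - l) * sqrt Qy) * (l * sqrt Qx + (1 - l) * sqrt Qy))
    with (l ^ 2 * (sqrt Qx * sqrt Qx) + (1 - l) ^ 2 * (sqrt Qy * sqrt Qy)
          + l * (1 - l) * (2 * sqrt Qx * sqrt Qy)) by ring.
  rewrite ex, ey.
  assert (0 <= l * (1 - l)) by nra.
  nra.
Qed.

Lemma concave_on_sqrt_quadratic (p q D : R) :
  0 <= p * q -> 4 * p * q <= D ->
  concave_on (fun t => 0 <= t) (fun t => sqrt ((p * t - q) ^ 2 + D * t)).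
Proof.
  intros hpq hD x y l hx hy hl.
  set (Q t := (p * t - q) ^ 2 + D * t).
  set (M := 2 * (p * x - q) * (p * y - q) + D * (x + y)).
  assert (hQ : forall t, 0 <= t -> 0 <= Q t) by (intros; unfold Q; nra).
  assert (polar : Q (l * x + (1 - l) * y)
                  = l ^ 2 * Q x + (1 - l) ^ 2 * Q y + l * (1 - l) * M)
    by (unfold Q, M; ring).
  assert (hM : 0 <= M).
  { assert (D * (x + y) >= 4 * p * q * (x + y)) by nra.
    assert (0 <= p * p * (x * y)) by (apply Rmult_le_pos; nra).
    assert (0 <= p * q * (x + y)) by (apply Rmult_le_pos; lra).
    assert (2 * (p * x - q) * (p * y - q) + 4 * p * q * (x + y)
            = 2 * (p * p * (x * y)) + 2 * (p * q * (x + y)) + 2 * (q * q)) by ring.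
    unfold M. nra. }
  assert (discr : M ^ 2 - 4 * Q x * Q y = (x - y) ^ 2 * D * (D - 4 * p * q))
    by (unfold M, Q; ring).
  assert (0 <= (x - y) ^ 2 * D * (D - 4 * p * q)).
  { apply Rmult_le_pos; [apply Rmult_le_pos|]; [apply pow2_ge_0 | nra | lra]. }
  change (l * sqrt (Q x) + (1 - l) * sqrt (Q y) <= sqrt (Q (l * x + (1 - l) * y))).
  rewrite polar.
  apply sqrt_convex_comb_le; auto; lra.
Qed.

Lemma concave_on_g6_form (d1 d2 d3 c : R) :
  0 < d1 + d2 -> 0 < d2 -> 4 * (d1 + d2) * d2 <= d3 -> 0 < c ->
  concave_on (fun t => 0 <= t)
    (fun t => (d1 * t - d2 * (1 - t)
               + sqrt ((d1 * t - d2 * (1 - t)) ^ 2 + d3 * t)) / (2 * c)).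
Proof.
  intros hp hq hD hc.
  apply (concave_on_ext _ (fun t => ((d1 + d2) * t - d2
           + sqrt (((d1 + d2) * t - d2) ^ 2 + d3 * t)) / (2 * c))).
  { intro t. replace ((d1 + d2) * t - d2) with (d1 * t - d2 * (1 - t)) by ring.
    reflexivity. }
  apply concave_on_affine_add_div; [lra |].
  apply concave_on_sqrt_quadratic; [nra | exact hD].
Qed.

Lemma g6_coefficients (K N : R) :
  2 <= K -> 2 * K <= N ->
  let alpha := 2 * K / (K + 1) in
  let beta := N / K - 2 in
  let a := (N + alpha) / 2 in
  let b := (alpha + beta) / 2 in
  let c := N / 2 in
  let d1 := 2 * a + b - 2 * c in
  let d2 := c - a + 1 in
  let d3 := 4 * a * b * (K - 1) in
  0 < d1 + d2 /\ 0 < d2 /\ 4 * (d1 + d2) * d2 <= d3 /\ 0 < c.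
Proof.
  intros hK hN alpha beta a b c d1 d2 d3.
  assert (halpha : alpha * (K + 1) = 2 * K) by (unfold alpha; field; lra).
  assert (hbeta : beta * K = N - 2 * K) by (unfold beta; field; lra).
  assert (alpha_range : 4 / 3 <= alpha < 2) by nra.
  assert (beta_nonneg : 0 <= beta) by nra.
  assert (hp : d1 + d2 = alpha + beta / 2 + 1) by (unfold d1, d2, a, b, c; field).
  assert (hq : d2 = 1 - alpha / 2) by (unfold d2, a, c; field).
  assert (hq_small : d2 * (K + 1) = 1) by nra.
  assert (hpq : (d1 + d2) * d2 <= 1 + beta / 6) by nra.
  assert (ha : 2 <= a) by (unfold a; lra).
  assert (hb : (1 + beta) / 2 <= b) by (unfold b; lra).
  assert (hab : 1 + beta <= a * b) by nra.
  assert (a * b <= a * b * (K - 1)) by nra.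
  repeat split; unfold d3, c in *; lra.
Qed.

Theorem lemma6p1 (k n : nat) (hk : (2 <= k)%nat) (hn : (2 * k <= n)%nat) :
  concave_on (fun t => 0 <= t) (g6 k n).
Proof.
  assert (hK : 2 <= INR k) by (change 2 with (INR 2); apply le_INR; lia).
  assert (hN : 2 * INR k <= INR n)
    by (change 2 with (INR 2); rewrite <- mult_INR; apply le_INR; lia).
  destruct (g6_coefficients (INR k) (INR n) hK hN) as (hp & hq & hD & hc).
  exact (concave_on_g6_form _ _ _ _ hp hq hD hc).
Qed.
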